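(* With $\mathcal{F}$ the infinite rooted tree in which every vertex has $p$ children ($p\ge2$ an integer), for any integral weight functions $a,b$ on $\mathcal{F}$ with nonnegative integer weights $\omega_a,\omega_b$, $$\langle a,b\rangle\ \ge\ \sum_{i=0}^{\infty}p^i\,\widehat\gamma_i(\omega_a)\widehat\gamma_i(\omega_b)\ \ge\ \sum_{i=0}^{\infty}p^i\,\widetilde\gamma_i(\omega_a)\widetilde\gamma_i(\omega_b).$$
   Context: An integral weight function with weight $\omega$ is a map $a:V(\mathcal{F})\to\mathbb{Z}_{\ge0}$ such that every infinite path from the root has $\sum_{v\in T}a(v)\ge\omega$ and $a(v)\ge\sum_{u\text{ child of }v}a(u)$ for every vertex $v$; $\langle a,b\rangle=\sum_v a(v)b(v)$. An integral (resp. real) resolution of $\omega$ is a sequence $(\gamma_i)_{i\ge0}$ with values in $\mathbb{Z}_{\ge0}$ (resp. in $\{0\}\cup[1,\infty)$) such that $\gamma_i\ge p\gamma_{i+1}$ for all $i$ and $\sum_i\gamma_i=\omega$. $\widehat\gamma(\omega)$ (resp. $\widetilde\gamma(\omega)$) denotes the lexicographically smallest integral (resp. real) resolution of $\omega$. *)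

From HB Require Import structures.
From mathcomp Require Import all_boot all_order all_algebra.
From mathcomp Require Import all_classical all_reals.
From mathcomp Require Import ereal esum.
Set Implicit Arguments. Unset Strict Implicit. Unset Printing Implicit Defensive.
Import Order.TTheory GRing.Theory Num.Theory.
Local Open Scope classical_set_scope.
Local Open Scope ring_scope.

(* The p-ary rooted tree F: vertices are finite words over 'I_p, the root is
   the empty word, and the children of v are the words rcons v j, j : 'I_p. *)
Definition vertex (p : nat) := seq 'I_p.

Definition path_vertex (p : nat) (f : nat -> 'I_p) (n : nat) : vertex p :=
  mkseq f n.

Definition integral_weight_function (R : realType) (p : nat)
    (a : vertex p -> nat) (w : nat) : Prop :=
  (forall f : nat -> 'I_p,
      ((w%:R : R)%:E <= \esum_(n in [set: nat]) ((a (path_vertex f n))%:R : R)%:E)%E)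
  /\ (forall v : vertex p, (\sum_(j < p) a (rcons v j) <= a v)%N).

Definition pairing (R : realType) (p : nat) (a b : vertex p -> nat) : \bar R :=
  \esum_(v in [set: vertex p]) (((a v * b v)%N)%:R : R)%:E.

Definition lex_lt {d : Order.disp_t} {T : porderType d} (g h : nat -> T) : Prop :=
  exists k, (forall i, (i < k)%N -> g i = h i) /\ (g k < h k)%O.
Definition lex_le {d : Order.disp_t} {T : porderType d} (g h : nat -> T) : Prop :=
  (forall i, g i = h i) \/ lex_lt g h.

Definition integral_resolution (R : realType) (p w : nat) (g : nat -> nat) : Prop :=
  (forall i, (p * g i.+1 <= g i)%N) /\
  (\esum_(i in [set: nat]) ((g i)%:R : R)%:E = ((w%:R : R))%:E)%E.

Definition real_resolution (R : realType) (p w : nat) (g : nat -> R) : Prop :=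
  (forall i, g i = 0 \/ 1 <= g i) /\
  (forall i, p%:R * g i.+1 <= g i) /\
  (\esum_(i in [set: nat]) (g i)%:E = ((w%:R : R))%:E)%E.

Definition is_hat_gamma (R : realType) (p w : nat) (g : nat -> nat) : Prop :=
  integral_resolution R p w g /\
  forall h, integral_resolution R p w h -> lex_le g h.

Definition is_tilde_gamma (R : realType) (p w : nat) (g : nat -> R) : Prop :=
  real_resolution p w g /\
  forall h, real_resolution p w h -> lex_le g h.

From HB Require Import structures.
From mathcomp Require Import all_boot all_order all_algebra.
From mathcomp Require Import all_classical all_reals.
From mathcomp Require Import ereal esum sequences normedtype.
From mathcomp Require Import zify ring lra.
Import Order.TTheory GRing.Theory Num.Theory.
Set Implicit Arguments. Unset Strict Implicit. Unset Printing Implicit Defensive.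
Local Open Scope classical_set_scope.
Local Open Scope ring_scope.

(* The lexicographically least integral resolution of [x] is greedy: its
   first term is the least [a] with [x <= a + a/p + a/p^2 + ...] (floors),
   and its tail is the greedy resolution of the remainder.  Along the path
   through children of least weight, a weight function restricts to an
   integral resolution, so its root weight dominates that first term; each
   subtree carries a weight function for the remaining weight.  Since the
   greedy pairing F(x, y) = sum_i p^i γ̂_i(x) γ̂_i(y) satisfies
   F(x, y) <= al be + p F(x - al, y - be) whenever al, be dominate the first
   greedy terms, induction on depth gives <a, b> >= F(wa, wb).

   The least real resolution of [x] is geometric, c p^-i for i < m, with [m]
   maximal such that 1 + p + ... + p^(m-1) <= x.  Comparing it with integral
   resolutions G, H is two applications of Chebyshev's sum inequality to the
   nonincreasing sequences p^i G_i and p^i H_i with weights p^-i. *)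

Section GreedyResolution.
Variable p : nat.
Hypothesis hp : (1 < p)%N.
Local Open Scope nat_scope.

(* [divsum a = a + a %/ p + a %/ p ^ 2 + ...] is the largest total of an
   integral resolution with first term [a]; [divsum_iter] carries a fuel
   argument, and [a.+1] steps suffice. *)
Fixpoint divsum_iter (n a : nat) : nat :=
  if n is n'.+1 then a + divsum_iter n' (a %/ p) else 0.
Definition divsum a := divsum_iter a.+1 a.

Lemma divsum_iter0 n : divsum_iter n 0 = 0.
Proof. by elim: n => //= n IH; rewrite div0n IH. Qed.

Lemma divsum_iter_stable n m a : a < n -> a < m -> divsum_iter n a = divsum_iter m a.
Proof.
elim: n m a => [|n IH] [|m] [|a] //= an am; first by rewrite div0n !divsum_iter0.
have lt_div : a.+1 %/ p < a.+1 by rewrite ltn_Pdiv.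
by congr (_ + _); apply: IH; apply: leq_trans lt_div _.
Qed.

Lemma divsumE a : divsum a = a + divsum (a %/ p).
Proof.
rewrite /divsum /=; congr (_ + _); case: a => [|a]; first by rewrite div0n !divsum_iter0.
by apply: (@divsum_iter_stable a.+1 (a.+1 %/ p).+1); rewrite ?ltn_Pdiv.
Qed.

Lemma leq_divsum a : a <= divsum a.
Proof. exact: leq_addr. Qed.

Lemma leq_divsum_iter2 n a b : a <= b -> divsum_iter n a <= divsum_iter n b.
Proof. by elim: n a b => //= n IH a b ab; rewrite leq_add // IH // leq_div2r. Qed.

Lemma leq_divsum2 a b : a <= b -> divsum a <= divsum b.
Proof. by move=> ab; rewrite /divsum (@divsum_iter_stable a.+1 b.+1) ?leq_divsum_iter2. Qed.

Lemma ltn_divsumS a : divsum a < divsum a.+1.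
Proof. by rewrite (divsumE a) (divsumE a.+1) addSn ltnS leq_add2l leq_divsum2 ?leq_div2r. Qed.

Lemma sum_resolution_le_divsum (h : nat -> nat) :
  (forall k, p * h k.+1 <= h k) -> forall N, \sum_(k < N) h k <= divsum (h 0).
Proof.
move=> hh N; elim: N h hh => [|N IH] h hh; first by rewrite big_ord0.
rewrite big_ord_recl divsumE leq_add2l.
apply: leq_trans (IH (fun k => h k.+1) (fun k => hh k.+1)) _.
by rewrite leq_divsum2 // leq_divRL ?(ltnW hp) // mulnC.
Qed.

Definition first_term x := ex_minn (ex_intro (fun a => x <= divsum a) x (leq_divsum x)).

Lemma first_term_spec x : x <= divsum (first_term x).
Proof. by rewrite /first_term; case: ex_minnP. Qed.

Lemma first_term_min x a : x <= divsum a -> first_term x <= a.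
Proof. by rewrite /first_term; case: ex_minnP => m _ H /H. Qed.

Lemma first_term_le x : first_term x <= x.
Proof. exact/first_term_min/leq_divsum. Qed.

Lemma first_term0 : first_term 0 = 0.
Proof. by apply/eqP; rewrite -leqn0 first_term_le. Qed.

Lemma leq_first_term x y : x <= y -> first_term x <= first_term y.
Proof. by move=> xy; apply/first_term_min/(leq_trans xy (first_term_spec y)). Qed.

Lemma first_termS x : first_term x.+1 <= (first_term x).+1.
Proof. exact/first_term_min/(leq_ltn_trans (first_term_spec x) (ltn_divsumS _)). Qed.

Lemma first_term_gt0 x : 0 < x -> 0 < first_term x.
Proof.
move=> x0; rewrite lt0n; apply/eqP => Ax0.
by have := first_term_spec x; rewrite Ax0 leqNgt x0.
Qed.

Lemma first_term_rest_lt x : 0 < x -> x - first_term x < x.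
Proof. by move=> x0; rewrite ltn_subrL first_term_gt0. Qed.

Lemma first_term_rest x : p * first_term (x - first_term x) <= first_term x.
Proof.
rewrite mulnC -leq_divRL ?(ltnW hp) //; apply: first_term_min.
by rewrite leq_subLR -divsumE first_term_spec.
Qed.

Fixpoint greedy (i x : nat) : nat :=
  if i is i'.+1 then greedy i' (x - first_term x) else first_term x.

Lemma greedy_resolution i x : p * greedy i.+1 x <= greedy i x.
Proof. by elim: i x => [|i IH] x /=; [exact: first_term_rest | exact: IH]. Qed.

Lemma greedy_eq0 i x : x <= i -> greedy i x = 0.
Proof.
elim: i x => [|i IH] x /=; first by rewrite leqn0 => /eqP ->; rewrite first_term0.
move=> xi; apply: IH; case: x xi => [|x] xi; first by rewrite first_term0.
by rewrite -ltnS (leq_trans (first_term_rest_lt _)).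
Qed.

Lemma sum_greedy x N : x <= N -> \sum_(i < N) greedy i x = x.
Proof.
elim: N x => [|N IH] x; first by rewrite leqn0 big_ord0 => /eqP ->.
move=> xN; rewrite big_ord_recl /= IH ?subnKC ?first_term_le //.
case: x xN => [|x] xN; first by rewrite first_term0.
by rewrite -ltnS (leq_trans (first_term_rest_lt _)).
Qed.

Fixpoint greedy_dot (n x y : nat) : nat :=
  if n is n'.+1 then
    first_term x * first_term y + p * greedy_dot n' (x - first_term x) (y - first_term y)
  else first_term x * first_term y.

Lemma greedy_dotC n x y : greedy_dot n x y = greedy_dot n y x.
Proof. by elim: n x y => [|n IH] x y /=; rewrite mulnC // IH. Qed.

Lemma greedy_dotE n x y :
  greedy_dot n x y = \sum_(i < n.+1) p ^ i * greedy i x * greedy i y.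
Proof.
elim: n x y => [|n IH] x y /=; first by rewrite big_ord1 mul1n.
rewrite big_ord_recl /= mul1n IH big_distrr /=; congr (_ + _).
by apply: eq_bigr => i _; rewrite expnS !mulnA.
Qed.

Lemma greedy_dotSl n x y : greedy_dot n x.+1 y <= greedy_dot n x y + first_term y.
Proof.
elim: n x y => [|n IH] x y /=; first by rewrite addnC -mulSn leq_mul2r first_termS orbT.
have [->|lt_Ax] := eqVneq (first_term x.+1) (first_term x).+1.
  by rewrite subSS mulSn; lia.
have eAx : first_term x.+1 = first_term x.
  apply/eqP; rewrite eqn_leq [first_term x <= _]leq_first_term // andbT.
  by rewrite -ltnS ltn_neqAle lt_Ax first_termS.
rewrite eAx subSn ?first_term_le // -addnA leq_add2l.
apply: leq_trans (leq_mul (leqnn p) (IH _ _)) _.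
by rewrite mulnDr leq_add2l first_term_rest.
Qed.

Lemma greedy_dotDl n x d y : greedy_dot n (x + d) y <= greedy_dot n x y + d * first_term y.
Proof.
elim: d => [|d IH]; first by rewrite addn0 mul0n addn0.
by rewrite addnS; apply: leq_trans (greedy_dotSl _ _ _) _; rewrite mulSn; lia.
Qed.

(* Moving the [d <= al - first_term x] surplus units back into the rest of [x]
   (and likewise for [y]) costs at most [d] times a first term of the other
   rest by [greedy_dotDl]; [p] times such a term is at most [first_term y] by
   [first_term_rest], so the cross terms of [al * be] pay for it. *)
Lemma greedy_dot_exchange n x y al be :
  first_term x <= al -> first_term y <= be ->
  greedy_dot n.+1 x y <= al * be + p * greedy_dot n (x - al) (y - be).
Proof.
move=> hal hbe /=.
set Ax := first_term x; set Ay := first_term y.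
set z := x - al; set w := y - be.
set d := x - Ax - z; set e := y - Ay - w.
have ex : x - Ax = z + d by rewrite /d subnKC // leq_sub2l.
have ey : y - Ay = w + e by rewrite /e subnKC // leq_sub2l.
have dle : d <= al - Ax by rewrite /d /z; lia.
have ele : e <= be - Ay by rewrite /e /w; lia.
have split_rest : greedy_dot n (x - Ax) (y - Ay) <=
    greedy_dot n z w + e * first_term z + d * first_term (y - Ay).
  rewrite ex ey; have shift_x := greedy_dotDl n z d (w + e).
  have shift_y := greedy_dotDl n w e z.
  by rewrite greedy_dotC (greedy_dotC n w z) in shift_y; lia.
have pAz : p * first_term z <= Ax.
  by apply: leq_trans (first_term_rest x); rewrite leq_mul2l leq_first_term ?orbT ?leq_sub2l.
have pAy : p * first_term (y - Ay) <= Ay := first_term_rest y.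
have Hd : p * (d * first_term (y - Ay)) <= (al - Ax) * Ay.
  by rewrite mulnCA (leq_trans (leq_mul (leqnn d) pAy)) // leq_mul2r dle orbT.
have He : p * (e * first_term z) <= (be - Ay) * Ax.
  by rewrite mulnCA (leq_trans (leq_mul (leqnn e) pAz)) // leq_mul2r ele orbT.
have Eab : al * be = Ax * Ay + (be - Ay) * Ax + (al - Ax) * Ay + (al - Ax) * (be - Ay).
  by rewrite -{1}(subnKC hal) -{1}(subnKC hbe) mulnDl !mulnDr [Ax * (_ - _)]mulnC; lia.
have := leq_mul (leqnn p) split_rest; rewrite !mulnDr; lia.
Qed.

End GreedyResolution.

Section TreeBound.
Variable p : nat.
Hypothesis hp : (1 < p)%N.
Local Open Scope nat_scope.

(* [integral_weight_function] with the path condition read through finite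
   partial sums, so that everything stays in [nat]. *)
Definition nat_weight_function (a : vertex p -> nat) (x : nat) :=
  (forall v, \sum_(j < p) a (rcons v j) <= a v) /\
  (forall f : nat -> 'I_p, exists N, x <= \sum_(k < N) a (path_vertex f k)).

(* Along the path that always moves to a child of least weight, the weights
   form an integral resolution headed by the root weight. *)
Lemma first_term_le_root a x : nat_weight_function a x -> first_term p x <= a [::].
Proof.
move=> [hchild hpath].
pose j0 : 'I_p := Ordinal (ltnW hp).
pose next (v : vertex p) := [arg min_(j < j0) a (rcons v j)].
pose fix walk n := if n is n'.+1 then rcons (walk n') (next (walk n')) else [::].
have walkE n : path_vertex (fun k => next (walk k)) n = walk n.
  by elim: n => [|n IH] //; rewrite /path_vertex mkseqS -/(path_vertex _ n) IH.
have walk_res k : p * a (walk k.+1) <= a (walk k).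
  apply: leq_trans (hchild (walk k)); rewrite /= /next.
  case: arg_minnP => // j _ Hj.
  rewrite -[X in X * _](card_ord p) -sum_nat_const.
  by apply: leq_sum => i _; exact: Hj.
have [N HN] := hpath (fun k => next (walk k)).
apply/first_term_min/(leq_trans HN); under eq_bigr do rewrite walkE.
exact: (sum_resolution_le_divsum hp walk_res).
Qed.

Lemma path_vertex_cons (j : 'I_p) (f : nat -> 'I_p) k :
  path_vertex (fun n => if n is n'.+1 then f n' else j) k.+1 = j :: path_vertex f k.
Proof.
rewrite /path_vertex /mkseq /= -[1%N]/(1 + 0)%N iotaDl -map_comp.
by congr (_ :: _); apply: eq_map.
Qed.

Lemma nat_weight_function_subtree a x (j : 'I_p) :
  nat_weight_function a x -> nat_weight_function (fun u => a (j :: u)) (x - a [::]).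
Proof.
move=> [hchild hpath]; split=> [v|f]; first exact: hchild.
have [[|N] HN] := hpath (fun n => if n is n'.+1 then f n' else j).
  by exists 0; move: HN; rewrite big_ord0 leqn0 => /eqP ->.
exists N; rewrite leq_subLR; apply: leq_trans HN _.
by rewrite big_ord_recl leq_add2l; under eq_bigr do rewrite path_vertex_cons.
Qed.

Fixpoint vertices_upto n : seq (vertex p) :=
  if n is n'.+1 then [::] :: [seq j :: u | j <- enum 'I_p, u <- vertices_upto n']
  else [:: [::]].

Lemma uniq_vertices_upto n : uniq (vertices_upto n).
Proof.
elim: n => [|n IH] //=; apply/andP; split.
  by apply/negP => /allpairsP [[j u] [_ _ /=]].
apply: allpairs_uniq => //; first exact: enum_uniq.
by move=> [j u] [j' u'] _ _ /= [-> ->].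
Qed.

Lemma greedy_dot_le_tree n a b x y :
  nat_weight_function a x -> nat_weight_function b y ->
  greedy_dot p n x y <= \sum_(v <- vertices_upto n) a v * b v.
Proof.
elim: n a b x y => [|n IH] a b x y wa wb.
  by rewrite /= big_seq1 leq_mul // first_term_le_root.
rewrite /= big_cons big_allpairs_dep.
apply: leq_trans (greedy_dot_exchange hp n (first_term_le_root wa) (first_term_le_root wb)) _.
rewrite leq_add2l -[X in X * _](card_ord p) -sum_nat_const -big_enum /=.
by apply: leq_sum => j _; exact: IH (nat_weight_function_subtree j wa) (nat_weight_function_subtree j wb).
Qed.

End TreeBound.

Lemma big_ord_trunc (T : Type) (idx : T) (op : Monoid.com_law idx) (F : nat -> T) n N :
  (n <= N)%N -> (forall i, (n <= i)%N -> F i = idx) ->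
  \big[op/idx]_(i < N) F i = \big[op/idx]_(i < n) F i.
Proof.
move=> nN F0; rewrite -(subnKC nN) big_split_ord /=.
by rewrite [X in op _ X]big1 ?Monoid.mulm1 // => i _; apply/F0/leq_addr.
Qed.

Section EsumNat.
Variable R : realType.
Local Open Scope ereal_scope.

Lemma esum_ord (f : nat -> R) N : (forall i, (0 <= f i)%R) ->
  (forall i, (N <= i)%N -> f i = 0%R) ->
  \esum_(i in [set: nat]) (f i)%:E = (\sum_(i < N) f i)%:E.
Proof.
move=> f0 fN; rewrite -nneseries_esumT => [|n]; last by rewrite lee_fin.
rewrite (nneseries_split 0 N) => [|k _]; last by rewrite lee_fin.
rewrite eseries0 ?adde0 => [|i]; last by rewrite add0n => /fN ->.
by rewrite add0n big_mkord sumEFin.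
Qed.

Lemma esum_ge_sum_ord (f : nat -> R) N : (forall i, (0 <= f i)%R) ->
  (\sum_(i < N) f i)%:E <= \esum_(i in [set: nat]) (f i)%:E.
Proof.
move=> f0; rewrite -nneseries_esumT => [|n]; last by rewrite lee_fin.
rewrite -sumEFin -(big_mkord xpredT (fun i => (f i)%:E)).
by apply: nneseries_lim_ge => n _ _; rewrite lee_fin.
Qed.

Lemma esum_natr_ge_partial (f : nat -> nat) (x : nat) :
  (x%:R : R)%:E <= \esum_(i in [set: nat]) ((f i)%:R : R)%:E ->
  exists N, (x <= \sum_(i < N) f i)%N.
Proof.
move=> H; apply/not_existsP => hn.
have hlt N : (\sum_(i < N) f i < x)%N by rewrite ltnNge; apply/negP => /(hn N).
have x0 : (0 < x)%N by have := hlt 0%N; rewrite big_ord0.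
move: H; rewrite -nneseries_esumT => [|n]; last by rewrite lee_fin.
apply/negP; rewrite -ltNge (@le_lt_trans _ _ ((x.-1)%:R : R)%:E) //; last first.
  by rewrite lte_fin ltr_nat prednK.
apply: lime_le; first by apply: is_cvg_nneseries => n _ _; rewrite lee_fin.
apply: nearW => n; rewrite big_mkord sumEFin lee_fin -natr_sum ler_nat.
by rewrite -ltnS prednK // hlt.
Qed.

Lemma esum_ge_sum_seq (T : choiceType) (s : seq T) (g : T -> nat) : uniq s ->
  ((\sum_(v <- s) g v)%N%:R : R)%:E <= \esum_(v in [set: T]) ((g v)%:R : R)%:E.
Proof.
move=> us; apply: esum_ge; exists [set` s]; first by split; [exact: finite_seq|].
by rewrite -fsbig_seq // natr_sum sumEFin.
Qed.

End EsumNat.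

Lemma lex_le_anti {d : Order.disp_t} {T : porderType d} (g h : nat -> T) :
  lex_le g h -> lex_le h g -> forall i, g i = h i.
Proof.
move=> [//|[k [e1 l1]]] [e|[k' [e2 l2]]]; first by move=> i; rewrite e.
exfalso; case: (ltngtP k k') => kk.
- by move: l1; rewrite (e2 k) // ltxx.
- by move: l2; rewrite (e1 k') // ltxx.
- by move: l2; rewrite -kk => /(lt_trans l1); rewrite ltxx.
Qed.

Lemma lex_le_head {d : Order.disp_t} {T : porderType d} (g h : nat -> T) :
  lex_le g h -> (g 0%N <= h 0%N)%O.
Proof. by move=> [->//|[[|k] [e l]]]; [exact: ltW | rewrite e]. Qed.

Section IntegralResolution.
Variable p : nat.
Hypothesis hp : (1 < p)%N.
Local Open Scope nat_scope.

Lemma resolution_expn_le (h : nat -> nat) : (forall k, p * h k.+1 <= h k) ->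
  forall k, p ^ k * h k <= h 0.
Proof.
move=> hh; elim=> [|k IH]; first by rewrite mul1n.
by apply: leq_trans IH; rewrite expnS (mulnC p) -mulnA leq_mul2l hh orbT.
Qed.

Lemma resolution_eq0 (h : nat -> nat) : (forall k, p * h k.+1 <= h k) ->
  forall k, h 0 <= k -> h k = 0.
Proof.
move=> hh k hk; apply/eqP; rewrite -leqn0 leqNgt; apply/negP => hk0.
have := leq_trans (leq_pmulr (p ^ k) hk0) (resolution_expn_le hh k).
by rewrite leqNgt (leq_trans _ (ltn_expl k hp)) // ltnS.
Qed.

Lemma integral_resolution_sum (R : realType) x h : integral_resolution R p x h ->
  forall N, h 0 <= N -> \sum_(k < N) h k = x.
Proof.
move=> [hh he] N hN.
have h0 := resolution_eq0 hh.
rewrite (big_ord_trunc _ hN h0).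
move: he; rewrite (@esum_ord R (fun i => (h i)%:R) (h 0)) // => [|i /h0 ->//].
by rewrite -natr_sum => /eqP; rewrite eqe eqr_nat => /eqP.
Qed.

Lemma greedy_integral_resolution (R : realType) x :
  integral_resolution R p x (fun i => greedy p i x).
Proof.
split=> [i|]; first exact: greedy_resolution.
rewrite (@esum_ord R (fun i => (greedy p i x)%:R) x) // => [|i /greedy_eq0 -> //].
by rewrite -natr_sum sum_greedy.
Qed.

(* By strong induction on [x]: the head of any resolution of [x] is at least
   [first_term x], and on equality the tails are resolutions of the same
   smaller weight. *)
Lemma greedy_lex_le x h : (forall k, p * h k.+1 <= h k) ->
  (forall N, h 0 <= N -> \sum_(k < N) h k = x) -> lex_le (fun i => greedy p i x) h.
Proof.
elim/ltn_ind: x h => x IH h hh hs.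
have h0_eq0 := resolution_eq0 hh.
have Ax : first_term p x <= h 0.
  by apply: first_term_min; rewrite -(hs (h 0)) // sum_resolution_le_divsum.
case: x IH hs Ax => [|x] IH hs Ax.
  left=> i; rewrite greedy_eq0 // h0_eq0 //.
  move: (hs (h 0).+1 (leqnSn _)); rewrite big_ord_recl => /eqP.
  by rewrite addn_eq0 => /andP[/eqP ->].
case: (ltngtP (first_term p x.+1) (h 0)) Ax => // [lt_Ax _ | eAx _].
  by right; exists 0; split.
have hs' N : h 1 <= N -> \sum_(k < N) h k.+1 = x.+1 - first_term p x.+1.
  move=> hN; have := hs (maxn N.+1 (h 0)) (leq_maxr _ _).
  rewrite (big_ord_trunc _ (leq_maxl _ _)) => [|[|i] hi //]; last first.
    by apply: (resolution_eq0 (fun k => hh k.+1)); apply: leq_trans hN hi.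
  by rewrite big_ord_recl eAx => <-; rewrite addKn.
case: (IH _ (first_term_rest_lt p (ltn0Sn x)) _ (fun k => hh k.+1) hs') => [e|[k [e l]]].
  by left=> -[|i] //=; rewrite e.
by right; exists k.+1; split=> // -[|i] hi //=; exact: e.
Qed.

Lemma is_hat_gammaE (R : realType) x g : is_hat_gamma R p x g -> forall i, g i = greedy p i x.
Proof.
move=> [gr gmin]; apply: lex_le_anti; first exact: gmin (greedy_integral_resolution R x).
exact: greedy_lex_le gr.1 (integral_resolution_sum gr).
Qed.

End IntegralResolution.

Lemma integral_weight_function_nat (R : realType) p (a : vertex p -> nat) w :
  integral_weight_function R a w -> nat_weight_function a w.
Proof. by move=> [hpath hchild]; split=> // f; exact: esum_natr_ge_partial (hpath f). Qed.

Lemma hat_gamma_le_pairing (R : realType) (p : nat) (hp : (1 < p)%N)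
    (a b : vertex p -> nat) (wa wb : nat) (gha ghb : nat -> nat) :
    integral_weight_function R a wa -> integral_weight_function R b wb ->
    is_hat_gamma R p wa gha -> is_hat_gamma R p wb ghb ->
  (\esum_(i in [set: nat]) ((((p ^ i) * gha i * ghb i)%N)%:R : R)%:E
     <= pairing R a b)%E.
Proof.
move=> ha hb /(is_hat_gammaE hp) ea /(is_hat_gammaE hp) eb.
rewrite (@esum_ord R (fun i => (p ^ i * gha i * ghb i)%N%:R) wa.+1) //; last first.
  by move=> i hi; rewrite ea greedy_eq0 ?muln0 ?mul0n // ltnW.
rewrite -natr_sum; apply: le_trans (esum_ge_sum_seq R _ (uniq_vertices_upto p wa)).
rewrite lee_fin ler_nat (eq_bigr (fun i : 'I_wa.+1 => p ^ i * greedy p i wa * greedy p i wb)%N).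
  rewrite -greedy_dotE.
  exact: (greedy_dot_le_tree hp wa (integral_weight_function_nat ha) (integral_weight_function_nat hb)).
by move=> i _; rewrite ea eb.
Qed.

Section Chebyshev.
Variable R : realFieldType.

Lemma chebyshev_sum n (w a b : nat -> R) : (forall i, 0 <= w i) ->
  (forall i j, 0 <= (a i - a j) * (b i - b j)) ->
  (\sum_(i < n) w i * a i) * (\sum_(i < n) w i * b i) <=
  (\sum_(i < n) w i) * (\sum_(i < n) w i * a i * b i).
Proof.
move=> w0 ab.
have D0 : 0 <= \sum_(i < n) \sum_(j < n) w i * w j * ((a i - a j) * (b i - b j)).
  apply: sumr_ge0 => i _; apply: sumr_ge0 => j _.
  exact: mulr_ge0 (mulr_ge0 (w0 i) (w0 j)) (ab i j).
(* The double sum expands to twice the difference of the two sides. *)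
have expand : \sum_(i < n) \sum_(j < n) w i * w j * ((a i - a j) * (b i - b j)) =
  ((\sum_(i < n) w i * a i * b i) * (\sum_(i < n) w i) +
   (\sum_(i < n) w i) * (\sum_(i < n) w i * a i * b i)) -
  ((\sum_(i < n) w i * a i) * (\sum_(i < n) w i * b i) +
   (\sum_(i < n) w i * b i) * (\sum_(i < n) w i * a i)).
  rewrite !big_distrlr /= -!big_split /= -sumrB; apply: eq_bigr => i _.
  by rewrite -!big_split /= -sumrB; apply: eq_bigr => j _; ring.
move: D0; rewrite expand; set X := \sum_(i < n) _ * _ * _; set Y := \sum_(i < n) w i.
set U := \sum_(i < n) w i * a i; set V := \sum_(i < n) w i * b i.
by rewrite [X * Y]mulrC [V * U]mulrC => ?; lra.
Qed.

Lemma nonincreasing_similarly_ordered (f g : nat -> R) :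
  (forall i, f i.+1 <= f i) -> (forall i, g i.+1 <= g i) ->
  forall i j, 0 <= (f i - f j) * (g i - g j).
Proof.
move=> /nonincreasing_seqP hf /nonincreasing_seqP hg i j.
case: (leqP i j) => ij; first by rewrite mulr_ge0 // subr_ge0; [apply: hf | apply: hg].
by rewrite mulr_le0 // subr_le0; [apply: hf | apply: hg]; exact: ltnW.
Qed.

(* The weighted mean of a nonincreasing sequence over a prefix dominates its
   mean over a longer range: Chebyshev against the indicator of the prefix. *)
Lemma chebyshev_sum_prefix m l (w v : nat -> R) : (m <= l)%N ->
  (forall i, 0 <= w i) -> (forall i, v i.+1 <= v i) ->
  (\sum_(i < m) w i) * (\sum_(i < l) w i * v i) <=
  (\sum_(i < l) w i) * (\sum_(i < m) w i * v i).
Proof.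
move=> ml w0 hv; pose ind i : R := (i < m)%:R.
have hind i : ind i.+1 <= ind i by rewrite /ind ler_nat; case: ltnP => // /ltnW ->.
have := chebyshev_sum l w0 (nonincreasing_similarly_ordered hind hv).
have trunc (F : nat -> R) : \sum_(i < l) w i * ind i * F i = \sum_(i < m) w i * F i.
  rewrite (big_ord_trunc (F := fun i => w i * ind i * F i) _ ml) => [|i]; last first.
    by rewrite /ind ltnNge => ->; rewrite mulr0 mul0r.
  by apply: eq_bigr => i _; rewrite /ind ltn_ord mulr1.
have := trunc (fun _ => 1); under eq_bigr do rewrite mulr1.
under [X in _ = X]eq_bigr do rewrite mulr1.
by move=> ->; rewrite trunc.
Qed.

End Chebyshev.

Section GeometricResolution.
Variable R : realFieldType.
Variable p : nat.
Hypothesis hp : (1 < p)%N.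

Local Notation P := (p%:R : R).
Local Notation r := (p%:R : R)^-1.

Let P_gt0 : 0 < P. Proof. by rewrite ltr0n ltnW. Qed.
Let r_ge0 : 0 <= r. Proof. by rewrite invr_ge0 ltW. Qed.
Let rP i : r ^+ i * P ^+ i = 1.
Proof. by rewrite -exprMn mulVf ?expr1n ?gt_eqF. Qed.

Definition repunit n := (\sum_(i < n) p ^ i)%N.
Definition geo_weight n := \sum_(i < n) r ^+ i.
Definition geo_res m (c : R) i := if (i < m)%N then c * r ^+ i else 0.

Lemma geo_weight_expr n : geo_weight n.+1 * P ^+ n = (repunit n.+1)%:R.
Proof.
elim: n => [|n IH]; first by rewrite /geo_weight /repunit !big_ord1 mul1r.
rewrite /geo_weight big_ord_recl /= expr0 -/(geo_weight n.+1).
have -> : \sum_(i < n.+1) r ^+ (bump 0 i) = r * geo_weight n.+1.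
  by rewrite /geo_weight mulr_sumr; apply: eq_bigr => i _; rewrite exprS.
rewrite /repunit big_ord_recr /= -/(repunit n.+1) natrD -IH natrX exprS.
by rewrite mulrDl mul1r addrC; congr (_ + _); field; rewrite gt_eqF.
Qed.

Lemma geo_weight_gt0 n : (0 < n)%N -> 0 < geo_weight n.
Proof.
case: n => // n _; rewrite /geo_weight big_ord_recl expr0 ltr_pwDl //.
by apply: sumr_ge0 => i _; rewrite exprn_ge0.
Qed.

Lemma leq_repunit n : (n <= repunit n)%N.
Proof.
rewrite -[n in (n <= _)%N]card_ord -sum1_card.
by apply: leq_sum => i _; rewrite expn_gt0 ltnW.
Qed.

Lemma geo_res_ge0 m c i : 0 <= c -> 0 <= geo_res m c i.
Proof. by move=> c0; rewrite /geo_res; case: ifP => // _; rewrite mulr_ge0 ?exprn_ge0. Qed.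

Lemma real_resolution_expr_le (g : nat -> R) :
  (forall i, P * g i.+1 <= g i) -> forall k, P ^+ k * g k <= g 0%N.
Proof.
move=> hg; elim=> [|k IH]; first by rewrite mul1r.
by apply: le_trans IH; rewrite exprSr -mulrA ler_wpM2l ?hg ?exprn_ge0 ?(ltW P_gt0).
Qed.

Lemma repunit_real_resolution_le (g : nat -> R) :
  (forall i, P * g i.+1 <= g i) -> (forall i, 0 <= g i) ->
  forall j, (repunit j.+1)%:R * g j <= \sum_(i < j.+1) g i.
Proof.
move=> hg g0 j; elim: j g hg g0 => [|j IH] g hg g0; first by rewrite /repunit !big_ord1 mul1r.
have := IH (fun i => g i.+1) (fun i => hg i.+1) (fun i => g0 i.+1) => /= IHg.
have := real_resolution_expr_le hg j.+1.
rewrite big_ord_recl /repunit big_ord_recr /= -/(repunit j.+1) natrD natrX mulrDl.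
by lra.
Qed.

Lemma geo_res_ge1 m c i : P ^+ m.-1 <= c -> (i < m)%N -> 1 <= geo_res m c i.
Proof.
move=> cge im; rewrite /geo_res im.
have le_im : (i <= m.-1)%N by rewrite -ltnS prednK // (leq_ltn_trans _ im).
apply: le_trans (ler_wpM2r (exprn_ge0 i r_ge0) cge).
rewrite -(subnK le_im) exprD -mulrA [P ^+ i * _]mulrC rP mulr1.
by rewrite exprn_ege1 // ler1n ltnW.
Qed.

Lemma geo_res_resolution m c i : 0 <= c -> P * geo_res m c i.+1 <= geo_res m c i.
Proof.
move=> c0; case: (ltnP i.+1 m) => im; last by rewrite {1}/geo_res ltnNge im mulr0 geo_res_ge0.
by rewrite /geo_res im (ltnW im) exprS mulrCA [P * _]mulrA mulfV ?mul1r // gt_eqF.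
Qed.

Lemma sum_geo_res m c : \sum_(i < m) geo_res m c i = c * geo_weight m.
Proof. by rewrite /geo_weight mulr_sumr; apply: eq_bigr => i _; rewrite /geo_res ltn_ord. Qed.

Lemma real_resolution_le_geo (g : nat -> R) c : (forall i, P * g i.+1 <= g i) ->
  g 0%N <= c -> forall i, g i <= c * r ^+ i.
Proof.
move=> hg g0c i.
have := ler_wpM2r (exprn_ge0 i r_ge0) (le_trans (real_resolution_expr_le hg i) g0c).
by rewrite mulrAC [P ^+ i * _]mulrC rP mul1r.
Qed.

Lemma scaled_resolution_noninc (G : nat -> nat) : (forall i, p * G i.+1 <= G i)%N ->
  forall i, P ^+ i.+1 * (G i.+1)%:R <= P ^+ i * (G i)%:R.
Proof. by move=> hG i; rewrite exprSr -mulrA ler_wpM2l ?exprn_ge0 ?(ltW P_gt0) // -natrM ler_nat. Qed.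

Lemma geo_dot m l c d N : (m <= l)%N -> (m <= N)%N ->
  \sum_(i < N) P ^+ i * geo_res m c i * geo_res l d i = c * d * geo_weight m.
Proof.
move=> ml mN; rewrite (big_ord_trunc (F := fun i => P ^+ i * geo_res m c i * geo_res l d i) _ mN).
  rewrite /geo_weight mulr_sumr; apply: eq_bigr => i _.
  rewrite /geo_res ltn_ord (leq_trans (ltn_ord i) ml).
  have -> : P ^+ i * (c * r ^+ i) * (d * r ^+ i) = r ^+ i * P ^+ i * (c * d * r ^+ i) by ring.
  by rewrite rP mul1r.
by move=> i im; rewrite /geo_res ltnNge im mulr0 mul0r.
Qed.

Lemma geo_dot_le_resolution_dot m l c d (G H : nat -> nat) N :
  (0 < m)%N -> (m <= l)%N -> (l <= N)%N ->
  (forall i, p * G i.+1 <= G i)%N -> (forall i, p * H i.+1 <= H i)%N ->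
  (forall i, (m <= i)%N -> G i = 0%N) ->
  c * geo_weight m = (\sum_(i < m) G i)%N%:R -> d * geo_weight l = (\sum_(i < l) H i)%N%:R ->
  \sum_(i < N) P ^+ i * geo_res m c i * geo_res l d i <= (\sum_(i < N) p ^ i * G i * H i)%N%:R.
Proof.
move=> m0 ml lN hG hH G0 cW dW.
have Wm0 := geo_weight_gt0 m0; have Wl0 := geo_weight_gt0 (leq_trans m0 ml).
pose U i := P ^+ i * (G i)%:R; pose V i := P ^+ i * (H i)%:R.
have sum_rU n : \sum_(i < n) r ^+ i * U i = (\sum_(i < n) G i)%N%:R.
  by rewrite natr_sum; apply: eq_bigr => i _; rewrite mulrA rP mul1r.
have sum_rV n : \sum_(i < n) r ^+ i * V i = (\sum_(i < n) H i)%N%:R.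
  by rewrite natr_sum; apply: eq_bigr => i _; rewrite mulrA rP mul1r.
set Y := \sum_(i < m) r ^+ i * V i; set Z := \sum_(i < m) r ^+ i * U i * V i.
have -> : (\sum_(i < N) p ^ i * G i * H i)%N%:R = Z.
  rewrite natr_sum (big_ord_trunc (F := fun i => (p ^ i * G i * H i)%N%:R) _ (leq_trans ml lN)).
    apply: eq_bigr => i _; rewrite !natrM natrX.
    have -> : r ^+ i * U i * V i = r ^+ i * P ^+ i * (P ^+ i * (G i)%:R * (H i)%:R) by rewrite /U /V; ring.
    by rewrite rP mul1r.
  by move=> i /G0 ->; rewrite muln0 mul0n.
have cZ : c * Y <= Z.
  have := chebyshev_sum m (fun i => exprn_ge0 i r_ge0)
    (nonincreasing_similarly_ordered (scaled_resolution_noninc hG) (scaled_resolution_noninc hH)).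
  by rewrite sum_rU -cW -/(geo_weight m) -/Y -/Z -mulrA mulrCA (ler_pM2l Wm0).
have dY : d * geo_weight m <= Y.
  have := chebyshev_sum_prefix ml (fun i => exprn_ge0 i r_ge0) (scaled_resolution_noninc hH).
  by rewrite sum_rV -dW -/(geo_weight m) -/(geo_weight l) -/Y mulrA mulrC [geo_weight m * d]mulrC (ler_pM2l Wl0).
have c0 : 0 <= c by rewrite -(pmulr_lge0 _ Wm0) cW ler0n.
by rewrite (geo_dot c d ml (leq_trans ml lN)) -mulrA; apply: le_trans cZ; rewrite ler_wpM2l.
Qed.

End GeometricResolution.

Section RealResolution.
Variable R : realType.
Variable p : nat.
Hypothesis hp : (1 < p)%N.

Local Notation P := (p%:R : R).

Lemma real_resolution_ge0 x (g : nat -> R) : real_resolution p x g -> forall i, 0 <= g i.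
Proof. by move=> [h _] i; case: (h i) => [->//|]; apply: le_trans. Qed.

Lemma real_resolution_sum_le x (g : nat -> R) : real_resolution p x g ->
  forall n, \sum_(i < n) g i <= x%:R.
Proof.
move=> gr n; rewrite -lee_fin -gr.2.2.
exact/esum_ge_sum_ord/(real_resolution_ge0 gr).
Qed.

Lemma real_resolution_supp x (g : nat -> R) : real_resolution p x g ->
  forall j, g j != 0 -> (repunit p j.+1 <= x)%N.
Proof.
move=> gr j gj; have g1 : 1 <= g j by case: (gr.1 j) => // e; rewrite e eqxx in gj.
rewrite -(ler_nat R); apply: le_trans (real_resolution_sum_le gr j.+1).
apply: le_trans (repunit_real_resolution_le hp gr.2.1 (real_resolution_ge0 gr) j).
by rewrite ler_peMr.
Qed.

Lemma real_resolution0 (g : nat -> R) : real_resolution p 0 g -> forall i, g i = 0.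
Proof.
move=> gr i; apply/eqP; rewrite eq_le (real_resolution_ge0 gr) andbT.
have := real_resolution_sum_le gr i.+1; rewrite big_ord_recr /=; apply: le_trans.
by rewrite lerDr sumr_ge0 // => j _; exact: real_resolution_ge0 gr j.
Qed.

Lemma geo_real_resolution x m c : (0 < m)%N -> P ^+ m.-1 <= c ->
  c * geo_weight R p m = x%:R -> real_resolution p x (geo_res p m c).
Proof.
move=> m0 cge cW; have c0 : 0 <= c by apply: le_trans cge; rewrite exprn_ge0.
split; [|split] => [i|i|].
- case: (ltnP i m) => im; first by right; exact: geo_res_ge1.
  by left; rewrite /geo_res ltnNge im.
- exact: geo_res_resolution.
rewrite (@esum_ord R _ m) => [|i|i]; last 2 first.
- exact: geo_res_ge0.
- by rewrite /geo_res ltnNge => ->.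
by rewrite sum_geo_res cW.
Qed.

(* With [m] the largest length such that [1 + p + ... + p^(m-1) <= x], the
   geometric sequence [geo_res m c] of sum [x] is a real resolution, so the
   least one starts below [c] and is then termwise below [geo_res m c]; no
   real resolution of [x] is longer than [m], so equal sums force equality. *)
Lemma is_tilde_gammaE x (g : nat -> R) : (0 < x)%N -> is_tilde_gamma p x g ->
  exists m c, [/\ (0 < m)%N, forall j, (repunit p j <= x)%N -> (j <= m)%N,
    c * geo_weight R p m = x%:R & forall i, g i = geo_res p m c i].
Proof.
move=> x0 [gr gmin].
have rep1 : repunit p 1 = 1%N by rewrite /repunit big_ord1.
have [|m qm maxm] := @ex_maxnP (fun j => repunit p j <= x)%N _ _ (fun j => leq_trans (leq_repunit hp j)).
  by exists 1%N; rewrite rep1.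
have m0 : (0 < m)%N by apply: maxm; rewrite rep1.
have W0 := geo_weight_gt0 R hp m0.
pose c := x%:R / geo_weight R p m.
have cW : c * geo_weight R p m = x%:R by rewrite mulfVK // gt_eqF.
have cge : P ^+ m.-1 <= c.
  rewrite -(ler_pM2l W0) [_ * c]mulrC cW -{1}(prednK m0) (geo_weight_expr _ hp) prednK //.
  by rewrite ler_nat.
have g0c : g 0%N <= c.
  by have := lex_le_head (gmin _ (geo_real_resolution m0 cge cW)); rewrite /geo_res m0 mulr1.
have g0 i : (m <= i)%N -> g i = 0.
  move=> mi; apply/eqP; apply: contraTT mi => /(real_resolution_supp gr)/maxm.
  by rewrite -ltnNge.
have gsum : \sum_(i < m) g i = x%:R.
  by move: gr.2.2; rewrite (esum_ord (real_resolution_ge0 gr) g0) => -[].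
have gle i : 0 <= c * P^-1 ^+ i - g i by rewrite subr_ge0 (real_resolution_le_geo hp gr.2.1 g0c).
have sum_eq0 : \sum_(i < m) (c * P^-1 ^+ i - g i) = 0.
  by rewrite sumrB gsum -mulr_sumr cW subrr.
have gE := psumr_eq0P (fun (i : 'I_m) _ => gle i) sum_eq0.
exists m, c; split=> // i; rewrite /geo_res; case: ifP => im; last by rewrite g0 // leqNgt im.
by apply/eqP; rewrite eq_sym -subr_eq0 (gE (Ordinal im)).
Qed.

Lemma integral_real_resolution x (G : nat -> nat) :
  integral_resolution R p x G -> real_resolution p x (fun i => (G i)%:R : R).
Proof.
move=> [hG sG]; split; [|split] => // i; last by rewrite -natrM ler_nat.
by case: (G i) => [|n]; [left | right; rewrite ler1n].
Qed.

Lemma integral_resolution_eq0 x m (G : nat -> nat) : integral_resolution R p x G ->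
  (forall j, (repunit p j <= x)%N -> (j <= m)%N) -> forall i, (m <= i)%N -> G i = 0%N.
Proof.
move=> iG maxm i; apply: contraTeq => Gi; rewrite -ltnNge; apply: maxm.
by apply: (real_resolution_supp (integral_real_resolution iG)); rewrite pnatr_eq0.
Qed.

Lemma integral_resolution_sum_ord x m (G : nat -> nat) : integral_resolution R p x G ->
  (forall i, (m <= i)%N -> G i = 0%N) -> (\sum_(i < m) G i)%N = x.
Proof.
move=> iG G0; rewrite -(integral_resolution_sum hp iG (leq_maxr m (G 0%N))).
by rewrite (big_ord_trunc _ (leq_maxl _ _) G0).
Qed.

Lemma tilde_gamma_dot_le x y (gta gtb : nat -> R) (G H : nat -> nat) :
  is_tilde_gamma p x gta -> is_tilde_gamma p y gtb ->
  integral_resolution R p x G -> integral_resolution R p y H ->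
  (\esum_(i in [set: nat]) (P ^+ i * gta i * gtb i)%:E
     <= \esum_(i in [set: nat]) ((p ^ i * G i * H i)%N%:R : R)%:E)%E.
Proof.
move=> ta tb iG iH.
have rhs_ge0 : (0 <= \esum_(i in [set: nat]) ((p ^ i * G i * H i)%N%:R : R)%:E)%E.
  by apply: esum_ge0 => i _; rewrite lee_fin.
case: x ta iG => [|x] ta iG.
  by rewrite esum1 // => i _; rewrite (real_resolution0 ta.1) mulr0 mul0r.
case: y tb iH => [|y] tb iH.
  by rewrite esum1 // => i _; rewrite (real_resolution0 tb.1) mulr0.
have [m [c [m0 maxm cW ga]]] := is_tilde_gammaE (ltn0Sn x) ta.
have [l [d [l0 maxl dW gb]]] := is_tilde_gammaE (ltn0Sn y) tb.
have G0 := integral_resolution_eq0 iG maxm; have H0 := integral_resolution_eq0 iH maxl.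
rewrite -(integral_resolution_sum_ord iG G0) in cW.
rewrite -(integral_resolution_sum_ord iH H0) in dW.
have c0 : 0 <= c by rewrite -(pmulr_lge0 _ (geo_weight_gt0 R hp m0)) cW ler0n.
have d0 : 0 <= d by rewrite -(pmulr_lge0 _ (geo_weight_gt0 R hp l0)) dW ler0n.
have lhs_ge0 i : 0 <= P ^+ i * gta i * gtb i.
  by rewrite ga gb !mulr_ge0 ?exprn_ge0 ?geo_res_ge0.
have lhs0 i : (m + l <= i)%N -> P ^+ i * gta i * gtb i = 0.
  by move=> mli; rewrite ga /geo_res ltnNge (leq_trans (leq_addr _ _) mli) mulr0 mul0r.
have rhs0 i : (m + l <= i)%N -> ((p ^ i * G i * H i)%N%:R : R) = 0.
  by move=> mli; rewrite G0 ?muln0 ?mul0n // (leq_trans (leq_addr _ _) mli).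
rewrite (esum_ord lhs_ge0 lhs0) (esum_ord (fun i => ler0n _ _) rhs0) lee_fin -natr_sum.
rewrite (eq_bigr (fun i : 'I_(m + l) => P ^+ i * geo_res p m c i * geo_res p l d i)) => [|i _];
  last by rewrite ga gb.
case: (leqP m l) => ml.
  exact: (geo_dot_le_resolution_dot hp m0 ml (leq_addl _ _) iG.1 iH.1 G0 cW dW).
under eq_bigr do rewrite mulrAC.
rewrite (eq_bigr (fun i : 'I_(m + l) => p ^ i * H i * G i)%N) => [|i _]; last by rewrite mulnAC.
exact: (geo_dot_le_resolution_dot hp l0 (ltnW ml) (leq_addr _ _) iH.1 iG.1 H0 dW cW).
Qed.

End RealResolution.

Theorem mainTheorem6 (R : realType) (p : nat) (hp : (2 <= p)%N)
    (a b : vertex p -> nat) (wa wb : nat)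
    (ha : integral_weight_function R a wa) (hb : integral_weight_function R b wb)
    (gha ghb : nat -> nat)
    (hgha : is_hat_gamma R p wa gha) (hghb : is_hat_gamma R p wb ghb)
    (gta gtb : nat -> R)
    (hgta : is_tilde_gamma p wa gta) (hgtb : is_tilde_gamma p wb gtb) :
  (\esum_(i in [set: nat]) ((((p ^ i) * gha i * ghb i)%N)%:R : R)%:E
     <= pairing R a b)%E /\
  (\esum_(i in [set: nat]) ((p%:R : R) ^+ i * gta i * gtb i)%:E
     <= \esum_(i in [set: nat]) ((((p ^ i) * gha i * ghb i)%N)%:R : R)%:E)%E.
Proof.
split; first exact: (hat_gamma_le_pairing hp ha hb hgha hghb).
exact: (tilde_gamma_dot_le hp hgta hgtb hgha.1 hghb.1).
Qed.
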